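(* There exists an algebraic structure $A$ with a single operation $f$ of countably infinite arity (i.e. $f:A^{\mathbb N}\to A$) such that the set of all non-generators of $A$ is not a substructure of $A$ (i.e. is not closed under $f$).
   Context: For an algebraic structure $A$ with operation $f:A^{\mathbb N}\to A$, a substructure is a subset closed under $f$. For $X\subseteq A$, $\langle X\rangle$ is the intersection of all substructures containing $X$, and $\langle X,a\rangle=\langle X\cup\{a\}\rangle$. An element $a\in A$ is a non-generator if for every $X\subseteq A$, $\langle X,a\rangle=A$ implies $\langle X\rangle=A$. *)

Definition substructure {A : Type} (f : (nat -> A) -> A) (S : A -> Prop) : Prop :=
  forall x : nat -> A, (forall n, S (x n)) -> S (f x).

Definition generated {A : Type} (f : (nat -> A) -> A) (X : A -> Prop) : A -> Prop :=
  fun a => forall S : A -> Prop, substructure f S -> (forall y, X y -> S y) -> S a.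

Definition generates {A : Type} (f : (nat -> A) -> A) (X : A -> Prop) : Prop :=
  forall a : A, generated f X a.

Definition non_generator {A : Type} (f : (nat -> A) -> A) (a : A) : Prop :=
  forall X : A -> Prop,
    generates f (fun y => X y \/ y = a) -> generates f X.

(* Take A = ℕ ∪ {∞} and let f send every unbounded sequence of naturals to ∞.
   On the remaining sequences f only looks at its first two arguments: it maps
   (k, _) to max(k - 1, 0), (∞, k) to k + 1 and (∞, ∞) to 0.  So {∞} alone generates A,
   while ∅ generates nothing: ∞ is not a non-generator, although it is f of the
   non-generators 0, 1, 2, ....  Each natural n is a non-generator because
   <X> ∪ {0, ..., n} is a substructure: every unbounded sequence in it has a
   term above n, hence in <X>, and <X> is closed downwards. *)

From Stdlib Require Import Classical ClassicalEpsilon Lia.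

Section Generation.

Variables (A : Type) (f : (nat -> A) -> A).

Lemma substructure_generated (X : A -> Prop) : substructure f (generated f X).
Proof. intros x Hx S HS HXS; apply HS; intro n; exact (Hx n S HS HXS). Qed.

Lemma generated_of_mem (X : A -> Prop) (a : A) : X a -> generated f X a.
Proof. intros Ha S _ HXS; exact (HXS a Ha). Qed.

Lemma generated_mono (X Y : A -> Prop) (a : A) :
  (forall y, X y -> Y y) -> generated f X a -> generated f Y a.
Proof. intros HXY Ha S HS HYS; apply Ha; auto. Qed.

Lemma not_generates_empty (a : A) : ~ generates f (fun _ => False).
Proof. intro Hgen; apply (Hgen a (fun _ => False)); [intros x Hx; apply (Hx 0) | auto]. Qed.

Lemma not_non_generator_of_generates1 (a : A) :
  generates f (fun y => y = a) -> ~ non_generator f a.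
Proof.
  intros Ha Hng; apply (not_generates_empty a), Hng.
  intro b; apply (generated_mono (fun y => y = a)); auto.
Qed.

End Generation.

Definition unbounded (x : nat -> option nat) : Prop :=
  forall m, exists i k, x i = Some k /\ m <= k.

(* [None] plays the role of ∞. *)
Definition bounded_op (x : nat -> option nat) : option nat :=
  match x 0 with
  | Some k => Some (pred k)
  | None => match x 1 with Some k => Some (S k) | None => Some 0 end
  end.

Definition op (x : nat -> option nat) : option nat :=
  if excluded_middle_informative (unbounded x) then None else bounded_op x.

Lemma op_unbounded (x : nat -> option nat) : unbounded x -> op x = None.
Proof. intro H; unfold op; destruct excluded_middle_informative; tauto. Qed.

Lemma op_bounded (x : nat -> option nat) : ~ unbounded x -> op x = bounded_op x.
Proof. intro H; unfold op; destruct excluded_middle_informative; tauto. Qed.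

Lemma not_unbounded_of_le (x : nat -> option nat) (b : nat) :
  (forall i k, x i = Some k -> k <= b) -> ~ unbounded x.
Proof. intros Hb Hx; destruct (Hx (S b)) as (i & k & Hi & Hk); apply Hb in Hi; lia. Qed.

Lemma unbounded_Some : unbounded Some.
Proof. intro m; exists m, m; auto. Qed.

Lemma generated_op_le (X : option nat -> Prop) (n k : nat) :
  generated op X (Some n) -> k <= n -> generated op X (Some k).
Proof.
  intros Hn Hkn; induction Hkn as [|n Hkn IH]; auto.
  apply IH.
  replace (Some n) with (op (fun _ => Some (S n))).
  - apply substructure_generated; auto.
  - rewrite op_bounded; auto.
    apply (not_unbounded_of_le _ (S n)); intros i m Hm; injection Hm; lia.
Qed.

Lemma generates_of_generated_None (X : option nat -> Prop) :
  generated op X None -> generates op X.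
Proof.
  intros HNone [k|]; auto.
  induction k as [|k IH].
  - replace (Some 0) with (op (fun _ => None)).
    + apply substructure_generated; auto.
    + rewrite op_bounded; auto.
      apply (not_unbounded_of_le _ 0); discriminate.
  - set (x := fun i : nat => match i with 0 => None | _ => Some k end).
    replace (Some (S k)) with (op x).
    + apply substructure_generated; intros [|i]; auto.
    + rewrite op_bounded; auto.
      apply (not_unbounded_of_le _ k); intros [|i] k' Hk'; inversion Hk'; lia.
Qed.

Lemma generates_None : generates op (fun y => y = None).
Proof. apply generates_of_generated_None, generated_of_mem; auto. Qed.

Lemma substructure_generated_or_le (X : option nat -> Prop) (n : nat) :
  substructure op (fun a => generated op X a \/ exists k, a = Some k /\ k <= n).
Proof.
  intros x Hx.
  destruct (classic (unbounded x)) as [Hunb | Hbdd].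
  - left.
    destruct (Hunb (S n)) as (i & m & Hi & Hm).
    assert (Hgen_m : generated op X (Some m)).
    { destruct (Hx i) as [Hg | (k & Hk & Hkn)]; rewrite Hi in *; auto.
      injection Hk; lia. }
    apply substructure_generated; intro j.
    destruct (Hx j) as [Hg | (k & Hk & Hkn)]; auto.
    rewrite Hk; apply (generated_op_le _ m); auto; lia.
  - rewrite op_bounded by auto; unfold bounded_op.
    destruct (Hx 0) as [Hg | (k & Hk & Hkn)].
    + destruct (x 0) as [k|] eqn:Hx0.
      * left; apply (generated_op_le _ k); auto; lia.
      * left; apply generates_of_generated_None; auto.
    + rewrite Hk; right; exists (pred k); split; auto; lia.
Qed.

Lemma non_generator_Some (n : nat) : non_generator op (Some n).
Proof.
  intros X Hgen.
  assert (HNone : generated op X None \/ exists k, None = Some k /\ k <= n).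
  { apply (Hgen None _ (substructure_generated_or_le X n)).
    intros y [Hy | ->]; [left; apply generated_of_mem | right; exists n]; auto. }
  destruct HNone as [HNone | (k & Hk & _)]; [|discriminate].
  apply generates_of_generated_None; auto.
Qed.

Theorem corollary7 :
  exists (A : Type) (f : (nat -> A) -> A),
    ~ substructure f (non_generator f).
Proof.
  exists (option nat), op; intro Hsub.
  assert (HNone : non_generator op None).
  { rewrite <- (op_unbounded _ unbounded_Some).
    apply Hsub; intro; apply non_generator_Some. }
  exact (not_non_generator_of_generates1 _ _ _ generates_None HNone).
Qed.
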